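(* Let $X$ be a compact metric space and $Y\subseteq X$ a nonempty subset, endowed with the induced metric. Then $d^{us}_{GH}(X,Y)=d_{GH}(X,Y)$.
   Context: For a metric space, $|xy|$ denotes distance. A set-valued map $f:X\rightrightarrows Y$ assigns to each $x\in X$ a nonempty $f(x)\subseteq Y$ and is identified with its graph. A correspondence between $X$ and $Y$ is a subset $R\subseteq X\times Y$ whose projections to $X$ and to $Y$ are both surjective, regarded as the set-valued map $x\mapsto R(x)=\{y:(x,y)\in R\}$; $R^{-1}=\{(y,x):(x,y)\in R\}$; $\mathcal R(X,Y)$ is the set of all correspondences. The distortion of a nonempty $\sigma\subseteq X\times Y$ is $\operatorname{dis}\sigma=\sup\{||xx'|-|yy'||:(x,y),(x',y')\in\sigma\}\in[0,\infty]$, and $d_{GH}(X,Y)=\frac12\inf\{\operatorname{dis}R:R\in\mathcal R(X,Y)\}$. A set-valued map $f$ is upper semicontinuous if for every $x$ and every open $U\supseteq f(x)$ there is a neighborhood $V$ of $x$ with $f(x')\subseteq U$ for all $x'\in V$. $\mathcal R_{us}(X,Y)$ is the set of $R\in\mathcal R(X,Y)$ with both $R$ and $R^{-1}$ upper semicontinuous, and $d^{us}_{GH}(X,Y)=\frac12\inf\{\operatorname{dis}R:R\in\mathcal R_{us}(X,Y)\}$. *)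

From Stdlib Require Import Reals Lra List ProofIrrelevance.
From Coquelicot Require Import Coquelicot.
Open Scope R_scope.

Record MetricSpace := {
  carrier :> Type;
  dist : carrier -> carrier -> R;
  dist_eq0 : forall x y, dist x y = 0 <-> x = y;
  dist_sym : forall x y, dist x y = dist y x;
  dist_tri : forall x y z, dist x z <= dist x y + dist y z
}.
Arguments dist {m} _ _.

Definition open_set {X : MetricSpace} (U : X -> Prop) : Prop :=
  forall x, U x -> exists e, 0 < e /\ forall y, dist x y < e -> U y.

Definition compact_space (X : MetricSpace) : Prop :=
  forall (I : Type) (U : I -> X -> Prop),
    (forall i, open_set (U i)) -> (forall x, exists i, U i x) ->
    exists l : list I, forall x, exists i, In i l /\ U i x.

Section Sub.
Variable (X : MetricSpace) (Y : X -> Prop).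
Definition sub_dist (a b : {x : X | Y x}) : R := dist (proj1_sig a) (proj1_sig b).
Lemma sub_dist_eq0 a b : sub_dist a b = 0 <-> a = b.
Proof.
  unfold sub_dist; split.
  - intros H. apply dist_eq0 in H. destruct a, b; simpl in *; subst.
    f_equal; apply proof_irrelevance.
  - intros ->. apply dist_eq0; reflexivity.
Qed.
Lemma sub_dist_sym a b : sub_dist a b = sub_dist b a.
Proof. apply dist_sym. Qed.
Lemma sub_dist_tri a b c : sub_dist a c <= sub_dist a b + sub_dist b c.
Proof. apply dist_tri. Qed.
Definition subspace : MetricSpace :=
  {| carrier := {x : X | Y x}; dist := sub_dist;
     dist_eq0 := sub_dist_eq0; dist_sym := sub_dist_sym; dist_tri := sub_dist_tri |}.
End Sub.

(** Set-valued maps / relations, identified with their graphs. *)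
Definition relation_inv {X Y : Type} (R : X -> Y -> Prop) : Y -> X -> Prop :=
  fun y x => R x y.

Definition is_correspondence {X Y : Type} (R : X -> Y -> Prop) : Prop :=
  (forall x, exists y, R x y) /\ (forall y, exists x, R x y).

Definition upper_semicontinuous {X Y : MetricSpace} (f : X -> Y -> Prop) : Prop :=
  forall (x : X) (U : Y -> Prop), open_set U -> (forall y, f x y -> U y) ->
    exists V : X -> Prop, open_set V /\ V x /\
      forall x', V x' -> forall y, f x' y -> U y.

Definition distortion {X Y : MetricSpace} (s : X -> Y -> Prop) : Rbar :=
  Lub_Rbar (fun r => exists (x x' : X) (y y' : Y),
    s x y /\ s x' y' /\ r = Rabs (dist x x' - dist y y')).

Definition dGH (X Y : MetricSpace) : Rbar :=
  Rbar_mult (/ 2) (Rbar_glb (fun v => exists R : X -> Y -> Prop,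
    is_correspondence R /\ v = distortion R)).

Definition dGH_us (X Y : MetricSpace) : Rbar :=
  Rbar_mult (/ 2) (Rbar_glb (fun v => exists R : X -> Y -> Prop,
    is_correspondence R /\ upper_semicontinuous R /\
    upper_semicontinuous (relation_inv R) /\ v = distortion R)).

(** Given a correspondence R and finite eps-nets of both spaces, relate x to y
    whenever x and y lie in closed eps-balls around net points p and q such that
    R relates some point of the ball around p to some point of the ball around q.
    This relation contains R, so it is again a correspondence, and its distortion
    exceeds that of R by at most 8 eps.  Whether x is related to y only depends on
    which of finitely many closed balls contain x, and a point near x lies in no
    more of these balls than x does; hence the relation and its inverse are upper
    semicontinuous.  Subsets of compact spaces are totally bounded, so such nets
    exist for every eps > 0. *)

From Pilot Require Import Defs.
From Stdlib Require Import Reals Lra List Classical.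
From Coquelicot Require Import Coquelicot.
Open Scope R_scope.

Local Notation dist := Defs.dist.
Local Notation dist_tri := Defs.dist_tri.
Local Notation dist_sym := Defs.dist_sym.
Local Notation open_set := Defs.open_set.

Definition totally_bounded (X : MetricSpace) : Prop :=
  forall eps, 0 < eps -> exists l : list X, forall x, exists p, In p l /\ dist x p <= eps.

Lemma dist_self (X : MetricSpace) (x : X) : dist x x = 0.
Proof. now apply dist_eq0. Qed.

Lemma open_ball (X : MetricSpace) (x : X) r : open_set (fun z : X => dist x z < r).
Proof.
  intros z Hz; exists (r - dist x z); split; [lra|].
  intros u Hu; pose proof (dist_tri X x z u); lra.
Qed.

Lemma abs_dist_diff_le (X : MetricSpace) (x x' a a' : X) :
  Rabs (dist x x' - dist a a') <= dist x a + dist x' a'.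
Proof.
  pose proof (dist_tri X x a x'); pose proof (dist_tri X a a' x');
  pose proof (dist_tri X a x a'); pose proof (dist_tri X x x' a');
  pose proof (dist_sym X x a); pose proof (dist_sym X x' a').
  unfold Rabs; destruct Rcase_abs; lra.
Qed.

Lemma compact_totally_bounded (X : MetricSpace) : compact_space X -> totally_bounded X.
Proof.
  intros HX eps Heps.
  destruct (HX X (fun c x : X => dist c x < eps)) as [l Hl].
  - intros c; apply open_ball.
  - intros x; exists x; rewrite dist_self; exact Heps.
  - exists l; intros x; destruct (Hl x) as [p [Hp Hxp]].
    exists p; split; [exact Hp|]; rewrite dist_sym; lra.
Qed.

Lemma list_choice {A B : Type} (P : A -> B -> Prop) (l : list A) :
  exists l' : list B, forall a, In a l -> (exists b, P a b) -> exists b, In b l' /\ P a b.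
Proof.
  induction l as [|a l [l' Hl']].
  - exists nil; intros a [].
  - destruct (classic (exists b, P a b)) as [[b Hb]|Hnone].
    + exists (b :: l'); intros a' [<-|Ha'] Hex.
      * now exists b; split; [left|].
      * destruct (Hl' a' Ha' Hex) as [b' [Hb' HPb']]; exists b'; split; [right|]; auto.
    + exists l'; intros a' [<-|Ha'] Hex; [contradiction|auto].
Qed.

Lemma subspace_totally_bounded (X : MetricSpace) (Y : X -> Prop) :
  totally_bounded X -> totally_bounded (subspace X Y).
Proof.
  intros HX eps Heps.
  destruct (HX (eps / 2)) as [l Hl]; [lra|].
  destruct (list_choice (fun (p : X) (q : subspace X Y) => dist (proj1_sig q) p <= eps / 2) l)
    as [lY HlY].
  exists lY; intros y; destruct (Hl (proj1_sig y)) as [p [Hp Hyp]].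
  destruct (HlY p Hp (ex_intro _ y Hyp)) as [q [Hq Hqp]].
  exists q; split; [exact Hq|]; simpl; unfold sub_dist.
  pose proof (dist_tri X (proj1_sig y) p (proj1_sig q)); pose proof (dist_sym X p (proj1_sig q)).
  lra.
Qed.

Lemma upper_semicontinuous_ext {A B : MetricSpace} (F G : A -> B -> Prop) :
  (forall x y, F x y <-> G x y) -> upper_semicontinuous F -> upper_semicontinuous G.
Proof.
  intros HFG HF x U HU HGU.
  destruct (HF x U HU) as [V [HV [HVx HVU]]]; [intros y Hy; apply HGU, HFG, Hy|].
  exists V; repeat split; auto.
  intros x' Hx' y Hy; apply (HVU x' Hx'), HFG, Hy.
Qed.

(** The complement of a closed ball is open. *)
Lemma near_closed_balls_subset (X : MetricSpace) (l : list X) (x : X) eps :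
  exists d, 0 < d /\ forall z, dist x z < d ->
    forall p, In p l -> dist z p <= eps -> dist x p <= eps.
Proof.
  induction l as [|a l [d [Hd Hl]]].
  - exists 1; split; [lra|]; intros z _ p [].
  - destruct (Rle_dec (dist x a) eps) as [Ha|Ha].
    + exists d; split; [exact Hd|].
      intros z Hz p [<-|Hp] Hzp; [exact Ha|exact (Hl z Hz p Hp Hzp)].
    + exists (Rmin d (dist x a - eps)); split; [apply Rmin_pos; lra|].
      intros z Hz p [<-|Hp] Hzp.
      * pose proof (Rmin_r d (dist x a - eps)); pose proof (dist_tri X x z a); lra.
      * pose proof (Rmin_l d (dist x a - eps)); apply (Hl z); [lra|exact Hp|exact Hzp].
Qed.

Lemma closed_ball_condition_usc {A B : MetricSpace} (l : list A) eps (P : A -> B -> Prop) :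
  upper_semicontinuous (fun x y => exists p, In p l /\ dist x p <= eps /\ P p y).
Proof.
  intros x U _ HU.
  destruct (near_closed_balls_subset A l x eps) as [d [Hd Hnear]].
  exists (fun z => dist x z < d); split; [apply open_ball|split].
  - rewrite dist_self; exact Hd.
  - intros z Hz y [p [Hp [Hzp HPp]]].
    apply HU; exists p; repeat split; auto; exact (Hnear z Hz p Hp Hzp).
Qed.

Lemma distortion_ge {A B : MetricSpace} (s : A -> B -> Prop) x x' y y' :
  s x y -> s x' y' -> Rbar_le (Rabs (dist x x' - dist y y')) (distortion s).
Proof.
  intros Hxy Hxy'; apply (proj1 (Lub_Rbar_correct _)).
  exists x, x', y, y'; auto.
Qed.

Lemma distortion_le {A B : MetricSpace} (s : A -> B -> Prop) (b : Rbar) :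
  (forall x x' y y', s x y -> s x' y' -> Rbar_le (Rabs (dist x x' - dist y y')) b) ->
  Rbar_le (distortion s) b.
Proof.
  intros Hb; apply (proj2 (Lub_Rbar_correct _)).
  intros r [x [x' [y [y' [Hxy [Hxy' ->]]]]]]; exact (Hb x x' y y' Hxy Hxy').
Qed.

Section NetThickening.

Variables (A B : MetricSpace) (lA : list A) (lB : list B) (eps : R).

Definition net_thickening (R : A -> B -> Prop) : A -> B -> Prop :=
  fun x y => exists p q, In p lA /\ In q lB /\ dist x p <= eps /\ dist y q <= eps /\
    exists a b, R a b /\ dist a p <= eps /\ dist b q <= eps.

Lemma net_thickening_usc R : upper_semicontinuous (net_thickening R).
Proof.
  apply (upper_semicontinuous_ext
    (fun x y => exists p, In p lA /\ dist x p <= eps /\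
       exists q, In q lB /\ dist y q <= eps /\
       exists a b, R a b /\ dist a p <= eps /\ dist b q <= eps));
  [|apply closed_ball_condition_usc].
  intros x y; split.
  - intros [p [Hp [Hxp [q [Hq [Hyq Hlink]]]]]]; exists p, q; auto.
  - intros [p [q [Hp [Hq [Hxp [Hyq Hlink]]]]]]; exists p; repeat split; auto; exists q; auto.
Qed.

Lemma net_thickening_close R x y : net_thickening R x y ->
  exists a b, R a b /\ dist x a <= 2 * eps /\ dist y b <= 2 * eps.
Proof.
  intros [p [q [_ [_ [Hxp [Hyq [a [b [Hab [Hap Hbq]]]]]]]]]].
  exists a, b; split; [exact Hab|split].
  - pose proof (dist_tri A x p a); pose proof (dist_sym A p a); lra.
  - pose proof (dist_tri B y q b); pose proof (dist_sym B q b); lra.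
Qed.

Lemma net_thickening_distortion R :
  Rbar_le (distortion (net_thickening R)) (Rbar_plus (distortion R) (8 * eps)).
Proof.
  apply distortion_le; intros x x' y y' Hxy Hxy'.
  destruct (net_thickening_close R x y Hxy) as [a [b [Hab [Hxa Hyb]]]].
  destruct (net_thickening_close R x' y' Hxy') as [a' [b' [Hab' [Hxa' Hyb']]]].
  assert (Hshift : Rabs (dist x x' - dist y y') <= Rabs (dist a a' - dist b b') + 8 * eps).
  { pose proof (abs_dist_diff_le A x x' a a'); pose proof (abs_dist_diff_le B y y' b b').
    revert H H0; unfold Rabs; repeat destruct Rcase_abs; intros; lra. }
  apply (Rbar_le_trans _ (Rbar_plus (Rabs (dist a a' - dist b b')) (8 * eps))); [exact Hshift|].
  apply Rbar_plus_le_compat; [exact (distortion_ge R a a' b b' Hab Hab')|apply Rbar_le_refl].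
Qed.

Section Nets.

Hypothesis HlA : forall x : A, exists p, In p lA /\ dist x p <= eps.
Hypothesis HlB : forall y : B, exists q, In q lB /\ dist y q <= eps.

Lemma net_thickening_contains R x y : R x y -> net_thickening R x y.
Proof.
  intros Hxy; destruct (HlA x) as [p [Hp Hxp]]; destruct (HlB y) as [q [Hq Hyq]].
  exists p, q; repeat split; auto; exists x, y; auto.
Qed.

Lemma net_thickening_correspondence R :
  is_correspondence R -> is_correspondence (net_thickening R).
Proof.
  intros [HR1 HR2]; split.
  - intros x; destruct (HR1 x) as [y Hy]; exists y; now apply net_thickening_contains.
  - intros y; destruct (HR2 y) as [x Hx]; exists x; now apply net_thickening_contains.
Qed.

End Nets.

End NetThickening.

Lemma relation_inv_net_thickening {A B : MetricSpace} lA lB eps (R : A -> B -> Prop) x y :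
  relation_inv (net_thickening A B lA lB eps R) y x <->
  net_thickening B A lB lA eps (relation_inv R) y x.
Proof.
  unfold relation_inv, net_thickening; split.
  - intros [p [q [Hp [Hq [Hxp [Hyq [a [b Hab]]]]]]]]; exists q, p; repeat split; auto; exists b, a; tauto.
  - intros [q [p [Hq [Hp [Hyq [Hxp [b [a Hab]]]]]]]]; exists p, q; repeat split; auto; exists a, b; tauto.
Qed.

Lemma net_thickening_inv_usc {A B : MetricSpace} lA lB eps (R : A -> B -> Prop) :
  upper_semicontinuous (relation_inv (net_thickening A B lA lB eps R)).
Proof.
  eapply upper_semicontinuous_ext; [|apply (net_thickening_usc B A lB lA eps (relation_inv R))].
  intros y x; symmetry; apply relation_inv_net_thickening.
Qed.

Lemma Rbar_glb_le (E : Rbar -> Prop) x : E x -> Rbar_le (Rbar_glb E) x.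
Proof. intros Hx; unfold Rbar_glb; destruct (Rbar_ex_glb E) as [g [Hlb Hglb]]; exact (Hlb x Hx). Qed.

Lemma Rbar_glb_ge (E : Rbar -> Prop) b :
  (forall x, E x -> Rbar_le b x) -> Rbar_le b (Rbar_glb E).
Proof. intros Hb; unfold Rbar_glb; destruct (Rbar_ex_glb E) as [g [Hlb Hglb]]; exact (Hglb b Hb). Qed.

Lemma Rbar_le_plus_epsilon (a b : Rbar) :
  (forall eps, 0 < eps -> Rbar_le a (Rbar_plus b eps)) -> Rbar_le a b.
Proof.
  intros Hab; destruct a as [a| |], b as [b| |]; simpl in *; auto.
  - apply Rle_plus_epsilon; exact Hab.
  - exact (Hab 1 Rlt_0_1).
  - exact (Hab 1 Rlt_0_1).
  - exact (Hab 1 Rlt_0_1).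
Qed.

Theorem dGH_us_eq_dGH (A B : MetricSpace) :
  totally_bounded A -> totally_bounded B -> dGH_us A B = dGH A B.
Proof.
  intros HA HB; unfold dGH_us, dGH; f_equal.
  apply Rbar_le_antisym.
  - apply Rbar_glb_ge; intros v [R [HR ->]].
    apply Rbar_le_plus_epsilon; intros eps Heps.
    destruct (HA (eps / 8)) as [lA HlA]; [lra|].
    destruct (HB (eps / 8)) as [lB HlB]; [lra|].
    apply (Rbar_le_trans _ (distortion (net_thickening A B lA lB (eps / 8) R))).
    + apply Rbar_glb_le; exists (net_thickening A B lA lB (eps / 8) R).
      split; [now apply net_thickening_correspondence|].
      split; [apply net_thickening_usc|].
      split; [apply net_thickening_inv_usc|reflexivity].
    + eapply Rbar_le_trans; [apply net_thickening_distortion|].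
      replace (8 * (eps / 8)) with eps by field; apply Rbar_le_refl.
  - apply Rbar_glb_subset; intros v [R [HR [_ [_ ->]]]]; exists R; auto.
Qed.

Theorem mainTheorem6 (X : MetricSpace) (Y : X -> Prop) :
  compact_space X -> (exists y, Y y) ->
  dGH_us X (subspace X Y) = dGH X (subspace X Y).
Proof.
  intros HX _.
  apply dGH_us_eq_dGH.
  - now apply compact_totally_bounded.
  - now apply subspace_totally_bounded, compact_totally_bounded.
Qed.
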